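(* Let $M=(V,\delta)$ be an $n$-point metric and let $r':V\to\mathbb{R}^+$ be a bounding function such that $SDG(M,r')$ is connected. Then $OPT(M)\le OPT(M,r') = O(\log n)\cdot OPT(M)$. More precisely, letting $T$ be the minimum spanning tree of $SDG(M,r')$ and defining $r(v)$ as the weight of the heaviest edge of $T$ incident to $v$, the assignment $r$ is feasible for the bounded problem and $COST(r)\le 2w(T) = O(\log n)\cdot w(MST(M)) = O(\log n)\cdot OPT(M)$.
   Context: For a metric $M=(V,\delta)$ and $r:V\to\mathbb{R}^+$, $SDG(M,r)$ is the graph on $V$ containing edge $(u,v)$ of weight $\delta(u,v)$ iff $r(u)\ge\delta(u,v)$ and $r(v)\ge\delta(u,v)$. The cost of a range assignment $r$ is $COST(r)=\sum_{v\in V} r(v)$. Given a bounding function $r'$, the bounded range assignment problem asks for $r$ with $r(v)\le r'(v)$ for all $v$, $SDG(M,r)$ connected, and minimum $COST(r)$; its optimal cost is $OPT(M,r')$. The unbounded problem is the case $r'(v)=diam(M)$ (the largest pairwise distance) for all $v$; its optimal cost is $OPT(M)$. $MST(M)$ is the minimum spanning tree of the complete weighted graph on $V$ with weights $\delta$. *)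

From Stdlib Require Import Reals List Arith.
Import ListNotations.
Open Scope R_scope.

Definition is_metric (n : nat) (d : nat -> nat -> R) : Prop :=
  (forall u v, (u < n)%nat -> (v < n)%nat -> 0 <= d u v) /\
  (forall u v, (u < n)%nat -> (v < n)%nat -> (d u v = 0 <-> u = v)) /\
  (forall u v, (u < n)%nat -> (v < n)%nat -> d u v = d v u) /\
  (forall u v w, (u < n)%nat -> (v < n)%nat -> (w < n)%nat ->
     d u w <= d u v + d v w).

Fixpoint walk (E : nat -> nat -> Prop) (u : nat) (p : list nat) (v : nat) : Prop :=
  match p with
  | [] => u = v
  | x :: p' => E u x /\ walk E x p' v
  end.

Definition connected (n : nat) (E : nat -> nat -> Prop) : Prop :=
  forall u v, (u < n)%nat -> (v < n)%nat -> exists p, walk E u p v.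

Definition SDG (n : nat) (d : nat -> nat -> R) (r : nat -> R) (u v : nat) : Prop :=
  (u < n)%nat /\ (v < n)%nat /\ u <> v /\ d u v <= r u /\ d u v <= r v.

Definition complete (n : nat) (u v : nat) : Prop :=
  (u < n)%nat /\ (v < n)%nat /\ u <> v.

Fixpoint sumR (l : list R) : R :=
  match l with [] => 0 | x :: l' => x + sumR l' end.

Definition COST (n : nat) (r : nat -> R) : R := sumR (map r (seq 0 n)).

Definition diam (n : nat) (d : nat -> nat -> R) : R :=
  fold_right Rmax 0 (flat_map (fun u => map (fun v => d u v) (seq 0 n)) (seq 0 n)).

Definition feasible (n : nat) (d : nat -> nat -> R) (rb r : nat -> R) : Prop :=
  (forall v, (v < n)%nat -> 0 <= r v /\ r v <= rb v) /\ connected n (SDG n d r).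

Definition is_OPT (n : nat) (d : nat -> nat -> R) (rb : nat -> R) (o : R) : Prop :=
  (exists r, feasible n d rb r /\ COST n r = o) /\
  (forall r, feasible n d rb r -> o <= COST n r).

(* OPT(M): unbounded problem, r'(v) = diam(M) for all v. *)
Definition is_OPT_unbounded (n : nat) (d : nat -> nat -> R) (o : R) : Prop :=
  is_OPT n d (fun _ => diam n d) o.

Definition tree_adj (T : list (nat * nat)) (u v : nat) : Prop :=
  In (u, v) T \/ In (v, u) T.

Definition is_spanning_tree (n : nat) (E : nat -> nat -> Prop)
    (T : list (nat * nat)) : Prop :=
  (forall e, In e T -> E (fst e) (snd e)) /\
  length T = (n - 1)%nat /\
  connected n (tree_adj T).

Definition weight (d : nat -> nat -> R) (T : list (nat * nat)) : R :=
  sumR (map (fun e => d (fst e) (snd e)) T).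

Definition is_MST (n : nat) (d : nat -> nat -> R) (E : nat -> nat -> Prop)
    (T : list (nat * nat)) : Prop :=
  is_spanning_tree n E T /\
  (forall T', is_spanning_tree n E T' -> weight d T <= weight d T').

Definition heaviest_incident (d : nat -> nat -> R) (T : list (nat * nat)) (v : nat) : R :=
  fold_right Rmax 0
    (map (fun e => d (fst e) (snd e))
       (filter (fun e => orb (Nat.eqb (fst e) v) (Nat.eqb (snd e) v)) T)).

(* Every feasible assignment r dominates the assignment [heaviest_incident d T]
   of a spanning tree T of SDG(M, r), so optima exist and are attained by such
   tree assignments, whose cost is at most 2 w(T).

   For the logarithmic bound let P be a Prim tree of SDG(M, r'). The new
   vertices of its edges of weight >= t are t-separated, since a closer pair
   would have offered Prim a lighter edge. For any assignment r with SDG(M, r)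
   connected, the balls of radius t/2 around t-separated points are disjoint
   and each carries total range >= t/2, because a walk must leave every ball.
   Hence at most 2 COST(r) / t edges of P weigh >= t, and summing over ranks
   w(P) <= 2 H_(n-1) COST(r) = O(log n) COST(r). Taking r optimal, or r the
   tree assignment of MST(M), gives both bounds; conversely a Prim tree of a
   connected SDG(M, r) weighs at most COST(r), so w(MST(M)) <= OPT(M). *)

From Stdlib Require Import Reals List Arith Lia Lra Classical.
Import ListNotations.
Open Scope R_scope.

Lemma sumR_app l1 l2 : sumR (l1 ++ l2) = sumR l1 + sumR l2.
Proof. induction l1; simpl; lra. Qed.

Lemma sumR_map_const {A} (c : R) (l : list A) :
  sumR (map (fun _ => c) l) = INR (length l) * c.
Proof. induction l; simpl length; [simpl; lra|]. rewrite S_INR. simpl. lra. Qed.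

Lemma sumR_map_le {A} (f g : A -> R) l :
  (forall x, In x l -> f x <= g x) -> sumR (map f l) <= sumR (map g l).
Proof.
  induction l as [|a l IH]; simpl; intros Hfg; [lra|].
  assert (f a <= g a) by auto. assert (sumR (map f l) <= sumR (map g l)) by auto. lra.
Qed.

Lemma sumR_map_nonneg {A} (f : A -> R) l :
  (forall x, In x l -> 0 <= f x) -> 0 <= sumR (map f l).
Proof.
  intros Hf. eapply Rle_trans; [|apply (sumR_map_le (fun _ => 0) f l Hf)].
  rewrite sumR_map_const. lra.
Qed.

Lemma sumR_map_add {A} (f g : A -> R) l :
  sumR (map (fun x => f x + g x) l) = sumR (map f l) + sumR (map g l).
Proof. induction l; simpl; lra. Qed.

Lemma sumR_map_scal {A} (c : R) (f : A -> R) l :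
  sumR (map (fun x => c * f x) l) = c * sumR (map f l).
Proof. induction l; simpl; lra. Qed.

Lemma sumR_map_swap {A B} (f : A -> B -> R) l1 l2 :
  sumR (map (fun a => sumR (map (fun b => f a b) l2)) l1) =
  sumR (map (fun b => sumR (map (fun a => f a b) l1)) l2).
Proof.
  induction l1 as [|a l1 IH]; simpl.
  - rewrite sumR_map_const. lra.
  - rewrite IH, <- sumR_map_add. reflexivity.
Qed.

Lemma sumR_map_incl {A} (f : A -> R) l l' :
  NoDup l -> incl l l' -> (forall x, In x l' -> 0 <= f x) ->
  sumR (map f l) <= sumR (map f l').
Proof.
  revert l'. induction l as [|x l IH]; intros l' Hnd Hi Hf; simpl.
  - apply sumR_map_nonneg; auto.
  - destruct (in_split x l' (Hi x (or_introl eq_refl))) as [a [b ->]].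
    inversion_clear Hnd as [|? ? Hx Hnd'].
    assert (sumR (map f l) <= sumR (map f (a ++ b))).
    { apply IH; auto.
      - intros y Hy. specialize (Hi y (or_intror Hy)).
        apply in_app_or in Hi. apply in_or_app.
        destruct Hi as [|[<-|]]; tauto.
      - intros y Hy. apply Hf. apply in_app_or in Hy. apply in_or_app. simpl. tauto. }
    rewrite map_app, sumR_app in *. simpl. lra.
Qed.

Lemma sumR_indicator_le (a : nat) (c : R) l :
  0 <= c -> NoDup l -> sumR (map (fun v => if Nat.eqb a v then c else 0) l) <= c.
Proof.
  intros Hc. induction l as [|x l IH]; simpl; intros Hnd; [lra|].
  inversion_clear Hnd as [|? ? Hx Hnd'].
  destruct (Nat.eqb_spec a x) as [<-|]; [|specialize (IH Hnd'); lra].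
  rewrite (map_ext_in _ (fun _ => 0)), sumR_map_const; [lra|].
  intros y Hy. destruct (Nat.eqb_spec a y) as [<-|]; tauto.
Qed.

Lemma fold_Rmax_ge l x : In x l -> x <= fold_right Rmax 0 l.
Proof.
  induction l as [|a l IH]; simpl; [tauto|]. intros [<-|Hx].
  - apply Rmax_l.
  - eapply Rle_trans; [apply IH; auto|apply Rmax_r].
Qed.

Lemma fold_Rmax_lub l B : 0 <= B -> (forall x, In x l -> x <= B) -> fold_right Rmax 0 l <= B.
Proof. induction l; simpl; intros; [auto|]. apply Rmax_lub; auto. Qed.

Lemma fold_Rmax_nonneg l : 0 <= fold_right Rmax 0 l.
Proof. induction l; simpl; [lra|]. eapply Rle_trans; [|apply Rmax_r]. auto. Qed.

Lemma fold_Rmax_le_sumR l : (forall x, In x l -> 0 <= x) -> fold_right Rmax 0 l <= sumR l.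
Proof.
  induction l as [|a l IH]; simpl; intros H; [lra|].
  assert (0 <= a) by auto. assert (fold_right Rmax 0 l <= sumR l) by auto.
  pose proof (fold_Rmax_nonneg l). apply Rmax_lub; lra.
Qed.

Lemma list_argmin {A} (P : A -> Prop) (f : A -> R) l :
  (exists x, In x l /\ P x) ->
  exists x, In x l /\ P x /\ forall y, In y l -> P y -> f x <= f y.
Proof.
  induction l as [|a l IH]; intros [x [Hx Px]]; [destruct Hx|].
  destruct (classic (exists x, In x l /\ P x)) as [Hex|Hnone].
  - destruct (IH Hex) as [m [Hm [Pm Hmin]]].
    destruct (classic (P a /\ f a <= f m)) as [[Pa Ham]|Ham].
    + exists a. repeat split; [left; auto|auto|].
      intros y [<-|Hy] Py; [lra|]. specialize (Hmin y Hy Py). lra.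
    + exists m. repeat split; [right; auto|auto|].
      intros y [<-|Hy] Py; [|auto].
      destruct (Rle_dec (f m) (f a)); auto. exfalso; apply Ham; split; auto; lra.
  - destruct Hx as [<-|Hx]; [|exfalso; eauto].
    exists a. repeat split; [left; auto|auto|].
    intros y [<-|Hy] Py; [lra|]. exfalso; eauto.
Qed.

Fixpoint lists_of {X} (l : list X) (k : nat) : list (list X) :=
  match k with
  | O => [[]]
  | S k => flat_map (fun x => map (cons x) (lists_of l k)) l
  end.

Lemma lists_of_In {X} (l : list X) t : incl t l -> In t (lists_of l (length t)).
Proof.
  induction t as [|a t IH]; simpl; intros H; [auto|].
  apply in_flat_map. exists a. split; [apply H; left; auto|]. apply in_map, IH.
  intros x Hx. apply H. right; auto.
Qed.

Lemma NoDup_map_filter {A B} (f : A -> B) (P : A -> bool) l :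
  NoDup (map f l) -> NoDup (map f (filter P l)).
Proof.
  induction l as [|a l IH]; simpl; intros H; [constructor|]. inversion_clear H as [|? ? Ha Hl].
  destruct (P a); simpl; auto. constructor; auto.
  intros Hc. apply Ha. apply in_map_iff in Hc. destruct Hc as [x [<- Hin]].
  apply filter_In in Hin. apply in_map. tauto.
Qed.

Lemma NoDup_bounded_full l n : NoDup l -> (forall x, In x l -> (x < n)%nat) ->
  (n <= length l)%nat -> forall y, (y < n)%nat -> In y l.
Proof.
  intros Hnd Hl Hlen y Hy.
  apply (NoDup_length_incl (l' := seq 0 n) Hnd); [rewrite length_seq; lia| |apply in_seq; lia].
  intros x Hx. apply in_seq. specialize (Hl x Hx). lia.
Qed.

Lemma NoDup_short_misses l n : NoDup l -> (length l < n)%nat ->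
  exists y, (y < n)%nat /\ ~ In y l.
Proof.
  intros Hnd Hlen. apply NNPP. intros Hc.
  assert (Hincl : incl (seq 0 n) l).
  { intros y Hy. apply in_seq in Hy. apply NNPP. intros Hn. apply Hc. exists y. split; [lia|auto]. }
  apply NoDup_incl_length in Hincl; [|apply seq_NoDup]. rewrite length_seq in Hincl. lia.
Qed.

(** * Harmonic numbers *)

Fixpoint harmonic (k : nat) : R :=
  match k with O => 0 | S k => harmonic k + / INR (S k) end.

Definition count_ge (t : R) (l : list R) : nat :=
  length (filter (fun x => if Rle_dec t x then true else false) l).

Lemma harmonic_nonneg k : 0 <= harmonic k.
Proof.
  induction k as [|k IH]; [simpl; lra|].
  change (harmonic (S k)) with (harmonic k + / INR (S k)).
  assert (0 < / INR (S k)) by (apply Rinv_0_lt_compat, lt_0_INR; lia). lra.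
Qed.

Lemma count_ge_app_cons t a x b : (count_ge t (a ++ b) <= count_ge t (a ++ x :: b))%nat.
Proof. unfold count_ge. rewrite !filter_app, !length_app. simpl. destruct (Rle_dec t x); simpl; lia. Qed.

(* With at most [K / t] entries above every threshold [t], the minimum of [l]
   is at most [K / length l]; removing it and inducting gives the harmonic sum. *)
Lemma sumR_le_harmonic K l : (forall x, In x l -> 0 <= x) ->
  (forall t, 0 < t -> INR (count_ge t l) * t <= K) -> sumR l <= K * harmonic (length l).
Proof.
  remember (length l) as N eqn:Hl. revert l Hl.
  induction N as [|N IH]; intros l Hl Hnn Hcount.
  - destruct l; [simpl; lra|discriminate].
  - destruct (list_argmin (fun _ => True) (fun x => x) l) as [m [Hm [_ Hmin]]].
    { destruct l as [|x l]; [discriminate|]. exists x. simpl. auto. }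
    destruct (in_split _ _ Hm) as [a [b ->]].
    rewrite length_app in Hl. simpl in Hl.
    assert (IH' : sumR (a ++ b) <= K * harmonic N).
    { apply IH; [rewrite length_app; lia| |].
      - intros x Hx. apply Hnn. apply in_app_or in Hx. apply in_or_app. simpl. tauto.
      - intros t Ht. eapply Rle_trans; [|apply (Hcount t Ht)].
        apply Rmult_le_compat_r; [lra|]. apply le_INR, count_ge_app_cons. }
    assert (HN : 0 < INR (S N)) by (apply lt_0_INR; lia).
    assert (Hm0 : 0 <= m) by auto.
    assert (HmK : INR (S N) * m <= K).
    { destruct (Rle_lt_or_eq_dec 0 m Hm0) as [Hpos|<-].
      - replace (S N) with (count_ge m (a ++ m :: b)); [apply Hcount; auto|].
        unfold count_ge. rewrite forallb_filter_id, length_app; [simpl; lia|].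
        apply forallb_forall. intros x Hx. destruct (Rle_dec m x) as [|Hx']; [auto|].
        exfalso. apply Hx'. apply Hmin; auto.
      - specialize (Hcount 1 ltac:(lra)). pose proof (pos_INR (count_ge 1 (a ++ 0 :: b))). lra. }
    assert (m <= K * / INR (S N)).
    { apply Rmult_le_reg_l with (INR (S N)); auto.
      replace (INR (S N) * (K * / INR (S N))) with K by (field; lra). auto. }
    rewrite sumR_app in *. simpl sumR.
    change (harmonic (S N)) with (harmonic N + / INR (S N)). lra.
Qed.

Lemma ln_0 : ln 0 = 0.
Proof. unfold ln. case Rlt_dec; [intros H; exfalso; exact (Rlt_irrefl 0 H)|reflexivity]. Qed.

Lemma ln_le_sub1 x : 0 < x -> ln x <= x - 1.
Proof. intros Hx. pose proof (exp_ineq1_le (ln x)). rewrite exp_ln in H by auto. lra. Qed.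

Lemma ln_le x y : 0 < x -> x <= y -> ln x <= ln y.
Proof. intros Hx [Hxy|<-]; [left; apply ln_increasing|]; lra. Qed.

Lemma ln_INR_nonneg n : 0 <= ln (INR n).
Proof.
  destruct n as [|n]; [simpl; rewrite ln_0; lra|].
  rewrite <- ln_1. apply ln_le; [lra|]. apply (le_INR 1). lia.
Qed.

Lemma harmonic_le_1_ln k : (1 <= k)%nat -> harmonic k <= 1 + ln (INR k).
Proof.
  induction k as [|k IH]; intros Hk; [lia|].
  destruct k as [|k]; [simpl; rewrite ln_1; lra|].
  specialize (IH ltac:(lia)).
  change (harmonic (S (S k))) with (harmonic (S k) + / INR (S (S k))).
  rewrite (S_INR (S k)). set (a := INR (S k)) in *.
  assert (Ha : 0 < a) by (apply lt_0_INR; lia).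
  (* ln (a / (a + 1)) <= a / (a + 1) - 1 = - / (a + 1) *)
  pose proof (ln_le_sub1 (a * / (a + 1)) ltac:(apply Rdiv_lt_0_compat; lra)) as Hln.
  rewrite ln_mult, ln_Rinv in Hln by (try apply Rinv_0_lt_compat; lra).
  replace (a * / (a + 1) - 1) with (- / (a + 1)) in Hln by (field; lra). lra.
Qed.

Lemma harmonic_pred_le_ln n : harmonic (n - 1) <= 3 * ln (INR n).
Proof.
  destruct (le_lt_dec n 1) as [Hn|Hn].
  - destruct n as [|[|]]; simpl; [rewrite ln_0|rewrite ln_1|lia]; lra.
  - pose proof (harmonic_le_1_ln (n - 1) ltac:(lia)).
    assert (ln (INR (n - 1)) <= ln (INR n)).
    { apply ln_le; [apply lt_0_INR; lia|apply le_INR; lia]. }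
    assert (ln 2 <= ln (INR n)) by (apply ln_le; [lra|apply (le_INR 2); lia]).
    pose proof ln_lt_2. lra.
Qed.

(** * Walks *)

Lemma walk_app E u p x q v : walk E u p x -> walk E x q v -> walk E u (p ++ q) v.
Proof.
  revert u. induction p as [|a p IH]; simpl; intros u Hp Hq.
  - subst; auto.
  - destruct Hp; split; eauto.
Qed.

Lemma walk_mono (E E' : nat -> nat -> Prop) u p v :
  (forall a b, E a b -> E' a b) -> walk E u p v -> walk E' u p v.
Proof. revert u. induction p; simpl; intros u HE W; [auto|]. destruct W; split; auto. Qed.

Lemma walk_rev (E : nat -> nat -> Prop) u p v :
  (forall a b, E a b -> E b a) -> walk E u p v -> exists q, walk E v q u.
Proof.
  revert u. induction p as [|x p IH]; simpl; intros u Hsym W.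
  - subst. exists []. reflexivity.
  - destruct W as [Hux W]. destruct (IH x Hsym W) as [q Hq].
    exists (q ++ [u]). eapply walk_app; eauto. simpl. auto.
Qed.

Lemma walk_In (E : nat -> nat -> Prop) (Q : nat -> Prop) u p v :
  (forall a b, E a b -> Q b) -> walk E u p v -> forall x, In x p -> Q x.
Proof.
  revert u. induction p as [|a p IH]; simpl; intros u HQ W x Hx; [destruct Hx|].
  destruct W as [Ha W]. destruct Hx as [<-|Hx]; eauto.
Qed.

Lemma walk_exits (E : nat -> nat -> Prop) (S : list nat) u p v :
  walk E u p v -> In u S -> ~ In v S -> exists x y, In x S /\ ~ In y S /\ E x y.
Proof.
  revert u. induction p as [|a p IH]; simpl; intros u W Hu Hv.
  - subst; contradiction.
  - destruct W as [Hua W]. destruct (in_dec Nat.eq_dec a S) as [Ha|Ha]; eauto.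
Qed.

Lemma walk_suffix E u p x q v : walk E u (p ++ x :: q) v -> walk E x q v.
Proof. revert u. induction p; simpl; intros u W; [tauto|]. destruct W; eauto. Qed.

Lemma walk_NoDup E u p v : walk E u p v -> exists q, walk E u q v /\ NoDup (u :: q).
Proof.
  revert u. induction p as [|x p IH]; simpl; intros u W.
  - exists []. split; [auto|]. constructor; [auto|constructor].
  - destruct W as [Hux W]. destruct (IH x W) as [q [Wq Nq]].
    destruct (in_dec Nat.eq_dec u (x :: q)) as [[<-|Hin]|Hnin].
    + exists q. auto.
    + destruct (in_split _ _ Hin) as [a [b ->]].
      exists b. split; [eapply walk_suffix; eauto|].
      inversion_clear Nq as [|? ? _ Nab]. eapply NoDup_app_remove_l; eauto.
    + exists (x :: q). split; [simpl; auto|]. constructor; auto.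
Qed.

(** * Prim trees *)

Definition prim_vertices (T : list (nat * nat)) : list nat := 0%nat :: map snd T.

(* [T] lists, most recent first, the edges [(p, v)] chosen by Prim's algorithm
   started at vertex [0]: [v] is the new vertex and [(p, v)] is a lightest
   [E]-edge leaving the tree built so far. *)
Fixpoint is_prim_tree (E : nat -> nat -> Prop) (w : nat -> nat -> R) (n : nat)
    (T : list (nat * nat)) : Prop :=
  match T with
  | [] => True
  | (p, v) :: T' =>
      is_prim_tree E w n T' /\ In p (prim_vertices T') /\ ~ In v (prim_vertices T') /\
      (v < n)%nat /\ E p v /\
      forall x y, In x (prim_vertices T') -> ~ In y (prim_vertices T') -> (y < n)%nat ->
        E x y -> w p v <= w x y
  end.

Section PrimTrees.
Variables (E : nat -> nat -> Prop) (w : nat -> nat -> R) (n : nat).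

Lemma prim_vertices_NoDup T : is_prim_tree E w n T -> NoDup (prim_vertices T).
Proof.
  induction T as [|[p v] T IH]; simpl; intros HT.
  - constructor; [auto|constructor].
  - destruct HT as [HT [_ [Hv _]]]. specialize (IH HT). unfold prim_vertices in *.
    inversion_clear IH as [|? ? H0 Hnd]. simpl in *.
    constructor; [intros [->|?]; tauto|]. constructor; auto.
Qed.

Lemma prim_new_vertices_lt T : is_prim_tree E w n T -> forall x, In x (map snd T) -> (x < n)%nat.
Proof.
  induction T as [|[p v] T IH]; simpl; intros HT x Hx; [destruct Hx|].
  destruct HT as [HT [_ [_ [Hvn _]]]]. destruct Hx as [<-|Hx]; auto.
Qed.

Lemma prim_vertices_lt T : (0 < n)%nat -> is_prim_tree E w n T ->
  forall x, In x (prim_vertices T) -> (x < n)%nat.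
Proof. intros Hn HT x [<-|Hx]; [auto|]. eapply prim_new_vertices_lt; eauto. Qed.

Lemma prim_edges T : is_prim_tree E w n T -> forall e, In e T -> E (fst e) (snd e).
Proof.
  induction T as [|[p v] T IH]; simpl; intros HT e He; [destruct He|].
  destruct HT as [HT [_ [_ [_ [Hpv _]]]]]. destruct He as [<-|He]; auto.
Qed.

Lemma prim_vertices_reachable T : is_prim_tree E w n T ->
  forall x, In x (prim_vertices T) -> exists p, walk (tree_adj T) 0%nat p x.
Proof.
  assert (Hcons : forall e T u v, tree_adj T u v -> tree_adj (e :: T) u v).
  { unfold tree_adj; simpl; tauto. }
  induction T as [|[p v] T IH]; simpl; intros HT x Hx.
  - destruct Hx as [<-|[]]. exists []. reflexivity.
  - destruct HT as [HT [Hp _]]. destruct Hx as [<-|[<-|Hx]].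
    + exists []. reflexivity.
    + destruct (IH HT p Hp) as [q Hq]. exists (q ++ [v]). eapply walk_app.
      * eapply walk_mono; [|eauto]. apply Hcons.
      * simpl. split; [left; left|]; auto.
    + destruct (IH HT x (or_intror Hx)) as [q Hq].
      exists q. eapply walk_mono; [|eauto]. apply Hcons.
Qed.

Hypothesis E_bounded : forall a b, E a b -> (a < n)%nat /\ (b < n)%nat.
Hypothesis E_connected : connected n E.

Lemma exists_prim_tree k : (k <= n - 1)%nat -> exists T, is_prim_tree E w n T /\ length T = k.
Proof.
  induction k as [|k IH]; intros Hk.
  - exists []. simpl. auto.
  - destruct IH as [T [HT Hl]]; [lia|].
    destruct (NoDup_short_misses (prim_vertices T) n (prim_vertices_NoDup T HT))
      as [y [Hy Hyn]].
    { unfold prim_vertices. simpl. rewrite length_map. lia. }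
    destruct (E_connected 0%nat y ltac:(lia) Hy) as [q Hq].
    destruct (walk_exits E (prim_vertices T) _ _ _ Hq (or_introl eq_refl) Hyn)
      as [x0 [y0 [Hx0 [Hy0 Hxy0]]]].
    destruct (list_argmin
      (fun e => In (fst e) (prim_vertices T) /\ ~ In (snd e) (prim_vertices T) /\
                (snd e < n)%nat /\ E (fst e) (snd e))
      (fun e => w (fst e) (snd e)) (list_prod (seq 0 n) (seq 0 n)))
      as [[p v] [_ [[Hp [Hv [Hvn Hpv]]] Hmin]]].
    { exists (x0, y0). destruct (E_bounded _ _ Hxy0).
      split; [apply in_prod; apply in_seq; lia|]. simpl. auto. }
    exists ((p, v) :: T). split; [|simpl; lia]. simpl. repeat split; auto.
    intros x z Hx Hz Hzn Hxz. apply (Hmin (x, z)); [|simpl; auto].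
    destruct (E_bounded _ _ Hxz). apply in_prod; apply in_seq; lia.
Qed.

Lemma exists_prim_spanning_tree : exists T, is_prim_tree E w n T /\ is_spanning_tree n E T.
Proof.
  destruct (exists_prim_tree (n - 1) (le_n _)) as [T [HT Hl]].
  exists T. split; [auto|]. split; [apply prim_edges; auto|]. split; [auto|].
  intros u v Hu Hv.
  assert (Hall : forall y, (y < n)%nat -> In y (prim_vertices T)).
  { apply NoDup_bounded_full; [apply prim_vertices_NoDup; auto| |].
    - apply prim_vertices_lt; [lia|auto].
    - unfold prim_vertices. simpl. rewrite length_map. lia. }
  destruct (prim_vertices_reachable T HT u (Hall u Hu)) as [p Hp].
  destruct (prim_vertices_reachable T HT v (Hall v Hv)) as [q Hq].
  destruct (walk_rev (tree_adj T) _ _ _ ltac:(unfold tree_adj; tauto) Hp) as [p' Hp'].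
  exists (p' ++ q). eapply walk_app; eauto.
Qed.

End PrimTrees.

(** * Spanning trees and range assignments *)

Lemma spanning_tree_mono n (E E' : nat -> nat -> Prop) T :
  (forall u v, E u v -> E' u v) -> is_spanning_tree n E T -> is_spanning_tree n E' T.
Proof. intros HE [HT Hrest]. split; auto. Qed.

Lemma SDG_complete n d r u v : SDG n d r u v -> complete n u v.
Proof. intros [? [? [? _]]]. repeat split; auto. Qed.

Lemma SDG_bounded n d r u v : SDG n d r u v -> (u < n)%nat /\ (v < n)%nat.
Proof. intros [? [? _]]. auto. Qed.

Lemma walk_SDG_bounded n d r u p v : walk (SDG n d r) u p v -> forall x, In x p -> (x < n)%nat.
Proof. apply walk_In. intros a b Hab. apply (SDG_bounded _ _ _ _ _ Hab). Qed.

Lemma spanning_tree_In_lists_of n T : is_spanning_tree n (complete n) T ->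
  In T (lists_of (list_prod (seq 0 n) (seq 0 n)) (n - 1)).
Proof.
  intros [HT [<- _]]. apply lists_of_In. intros [u v] He.
  destruct (HT _ He) as [? [? _]]. apply in_prod; apply in_seq; simpl in *; lia.
Qed.

Lemma SDG_mono n d r r2 u v : (forall x, (x < n)%nat -> r x <= r2 x) ->
  SDG n d r u v -> SDG n d r2 u v.
Proof.
  intros Hr [Hu [Hv [Huv [H1 H2]]]].
  repeat split; auto; [apply (Rle_trans _ _ _ H1)|apply (Rle_trans _ _ _ H2)]; auto.
Qed.

Lemma COST_le n r r2 : (forall v, (v < n)%nat -> r v <= r2 v) -> COST n r <= COST n r2.
Proof. intros H. apply sumR_map_le. intros v Hv. apply in_seq in Hv. apply H. lia. Qed.

Lemma COST_nonneg n r : (forall v, (v < n)%nat -> 0 <= r v) -> 0 <= COST n r.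
Proof. intros H. apply sumR_map_nonneg. intros v Hv. apply in_seq in Hv. apply H. lia. Qed.

Lemma feasible_nonneg n d rb r : feasible n d rb r -> forall v, (v < n)%nat -> 0 <= r v.
Proof. intros [H _] v Hv. apply H; auto. Qed.

Lemma heaviest_incident_nonneg d T v : 0 <= heaviest_incident d T v.
Proof. apply fold_Rmax_nonneg. Qed.

Lemma heaviest_incident_ge d T e : In e T ->
  d (fst e) (snd e) <= heaviest_incident d T (fst e) /\
  d (fst e) (snd e) <= heaviest_incident d T (snd e).
Proof.
  intros He. split; apply fold_Rmax_ge; apply in_map_iff; exists e; split; auto;
  apply filter_In; split; auto; apply Bool.orb_true_iff; [left|right]; apply Nat.eqb_refl.
Qed.

Lemma heaviest_incident_le d T r v :
  (forall e, In e T -> d (fst e) (snd e) <= r (fst e) /\ d (fst e) (snd e) <= r (snd e)) ->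
  0 <= r v -> heaviest_incident d T v <= r v.
Proof.
  intros H H0. apply fold_Rmax_lub; auto. intros x Hx.
  apply in_map_iff in Hx. destruct Hx as [e [<- Hin]].
  apply filter_In in Hin. destruct Hin as [Hin Hc]. destruct (H e Hin).
  apply Bool.orb_true_iff in Hc.
  destruct Hc as [Hc|Hc]; apply Nat.eqb_eq in Hc; rewrite <- Hc; auto.
Qed.

Lemma heaviest_incident_le_range n d rb T v : is_spanning_tree n (SDG n d rb) T ->
  0 <= rb v -> heaviest_incident d T v <= rb v.
Proof.
  intros [HT _] Hv. apply heaviest_incident_le; auto.
  intros e He. destruct (HT e He) as [_ [_ [_ ?]]]. auto.
Qed.

Lemma prim_tree_weight_le_COST n d r T : (forall v, (v < n)%nat -> 0 <= r v) ->
  is_prim_tree (SDG n d r) d n T -> weight d T <= COST n r.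
Proof.
  intros Hr HT. unfold weight, COST.
  (* each new vertex [v] pays for its own edge [(p, v)] since [d p v <= r v] *)
  apply Rle_trans with (sumR (map r (map snd T))).
  - rewrite map_map. apply sumR_map_le. intros e He.
    destruct (prim_edges _ _ _ _ HT e He) as [_ [_ [_ [_ ?]]]]. auto.
  - apply sumR_map_incl.
    + pose proof (prim_vertices_NoDup _ _ _ _ HT) as Hnd. inversion_clear Hnd. auto.
    + intros x Hx. apply in_seq. pose proof (prim_new_vertices_lt _ _ _ _ HT x Hx). lia.
    + intros x Hx. apply in_seq in Hx. apply Hr. lia.
Qed.

Lemma exists_spanning_tree_weight_le_COST n d r : (forall v, (v < n)%nat -> 0 <= r v) ->
  connected n (SDG n d r) ->
  exists T, is_spanning_tree n (complete n) T /\ weight d T <= COST n r.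
Proof.
  intros Hr Hc. destruct (exists_prim_spanning_tree _ d n (SDG_bounded n d r) Hc) as [T [HTp HT]].
  exists T. split; [|apply prim_tree_weight_le_COST; auto].
  eapply spanning_tree_mono; [|eauto]. apply SDG_complete.
Qed.

Section Metric.
Variables (n : nat) (d : nat -> nat -> R).
Hypothesis d_metric : is_metric n d.

Lemma dist_nonneg u v : (u < n)%nat -> (v < n)%nat -> 0 <= d u v.
Proof. apply d_metric. Qed.

Lemma dist_sym u v : (u < n)%nat -> (v < n)%nat -> d u v = d v u.
Proof. apply d_metric. Qed.

Lemma dist_refl u : (u < n)%nat -> d u u = 0.
Proof. intros Hu. apply d_metric; auto. Qed.

Lemma dist_triangle u v x : (u < n)%nat -> (v < n)%nat -> (x < n)%nat ->
  d u x <= d u v + d v x.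
Proof. apply d_metric. Qed.

Lemma SDG_sym r u v : SDG n d r u v -> SDG n d r v u.
Proof.
  intros [Hu [Hv [Huv [H1 H2]]]]. rewrite dist_sym in H1, H2 by auto.
  repeat split; auto.
Qed.

Lemma dist_le_diam u v : (u < n)%nat -> (v < n)%nat -> d u v <= diam n d.
Proof.
  intros Hu Hv. apply fold_Rmax_ge. apply in_flat_map. exists u. split; [apply in_seq; lia|].
  apply in_map. apply in_seq; lia.
Qed.

Lemma complete_SDG_diam u v : complete n u v -> SDG n d (fun _ => diam n d) u v.
Proof. intros [Hu [Hv Huv]]. repeat split; auto; apply dist_le_diam; auto. Qed.

Lemma connected_SDG_heaviest_incident T : is_spanning_tree n (complete n) T ->
  connected n (SDG n d (heaviest_incident d T)).
Proof.
  intros [HT [_ Hc]] u v Hu Hv. destruct (Hc u v Hu Hv) as [p Hp]. exists p.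
  eapply walk_mono; [|eauto]. intros a b Hab.
  assert (Hdir : forall e, In e T -> SDG n d (heaviest_incident d T) (fst e) (snd e)).
  { intros e He. destruct (HT e He) as [? [? ?]]. destruct (heaviest_incident_ge d T e He).
    repeat split; auto. }
  destruct Hab as [Hab|Hab]; [apply (Hdir _ Hab)|apply SDG_sym, (Hdir _ Hab)].
Qed.

Lemma COST_heaviest_incident_le T : (forall e, In e T -> complete n (fst e) (snd e)) ->
  COST n (heaviest_incident d T) <= 2 * weight d T.
Proof.
  intros HT. unfold COST, weight, heaviest_incident.
  set (we := fun e : nat * nat => d (fst e) (snd e)).
  assert (Hw : forall e, In e T -> 0 <= we e).
  { intros e He. destruct (HT e He) as [? [? _]]. apply dist_nonneg; auto. }
  (* the heaviest incident edge weighs at most the sum of all incident edges *)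
  apply Rle_trans with (sumR (map (fun v => sumR (map (fun e =>
     (if Nat.eqb (fst e) v then we e else 0) + (if Nat.eqb (snd e) v then we e else 0)) T))
     (seq 0 n))).
  - apply sumR_map_le. intros v _. eapply Rle_trans.
    + apply fold_Rmax_le_sumR. intros x Hx. apply in_map_iff in Hx.
      destruct Hx as [e [<- Hin]]. apply filter_In in Hin. apply Hw; tauto.
    + induction T as [|e T IH]; simpl; [lra|].
      assert (0 <= we e) by (apply Hw; left; auto).
      assert (IH' := IH (fun e' He' => HT e' (or_intror He')) (fun e' He' => Hw e' (or_intror He'))).
      destruct (Nat.eqb (fst e) v), (Nat.eqb (snd e) v); simpl; fold we; lra.
  - rewrite sumR_map_swap, <- sumR_map_scal. apply sumR_map_le. intros e He.
    rewrite sumR_map_add.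
    pose proof (sumR_indicator_le (fst e) (we e) (seq 0 n) (Hw e He) (seq_NoDup _ _)).
    pose proof (sumR_indicator_le (snd e) (we e) (seq 0 n) (Hw e He) (seq_NoDup _ _)). lra.
Qed.

Lemma diam_nonneg : 0 <= diam n d.
Proof. apply fold_Rmax_nonneg. Qed.

Lemma connected_SDG_diam : connected n (SDG n d (fun _ => diam n d)).
Proof.
  intros u v Hu Hv. destruct (Nat.eq_dec u v) as [<-|Huv]; [exists []; reflexivity|].
  exists [v]. simpl. split; [|auto]. apply complete_SDG_diam. repeat split; auto.
Qed.

Lemma feasible_heaviest_incident rb T : (forall v, (v < n)%nat -> 0 <= rb v) ->
  is_spanning_tree n (SDG n d rb) T -> feasible n d rb (heaviest_incident d T).
Proof.
  intros Hrb HT. split.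
  - intros v Hv. split; [apply heaviest_incident_nonneg|].
    apply (heaviest_incident_le_range n); auto.
  - apply connected_SDG_heaviest_incident.
    eapply spanning_tree_mono; [|eauto]. apply SDG_complete.
Qed.

Lemma feasible_tree_below rb r : feasible n d rb r ->
  exists T, is_spanning_tree n (SDG n d rb) T /\
    forall v, (v < n)%nat -> heaviest_incident d T v <= r v.
Proof.
  intros [Hr Hc].
  destruct (exists_prim_spanning_tree _ d n (SDG_bounded n d r) Hc) as [T [_ HT]].
  exists T. split.
  - eapply spanning_tree_mono; [|eauto]. intros u v. apply SDG_mono. apply Hr.
  - intros v Hv. apply (heaviest_incident_le_range n); auto. apply Hr; auto.
Qed.

Lemma exists_OPT rb : (forall v, (v < n)%nat -> 0 <= rb v) -> connected n (SDG n d rb) ->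
  exists o, is_OPT n d rb o.
Proof.
  intros Hrb Hc.
  assert (Htrees : forall T, is_spanning_tree n (SDG n d rb) T ->
    In T (lists_of (list_prod (seq 0 n) (seq 0 n)) (n - 1))).
  { intros T HT. apply spanning_tree_In_lists_of.
    eapply spanning_tree_mono; [|eauto]. apply SDG_complete. }
  destruct (list_argmin (is_spanning_tree n (SDG n d rb))
              (fun T => COST n (heaviest_incident d T))
              (lists_of (list_prod (seq 0 n) (seq 0 n)) (n - 1))) as [T [_ [HT Hmin]]].
  { destruct (exists_prim_spanning_tree _ d n (SDG_bounded n d rb) Hc) as [T [_ HT]].
    exists T. auto. }
  exists (COST n (heaviest_incident d T)). split.
  - exists (heaviest_incident d T). split; auto. apply feasible_heaviest_incident; auto.
  - intros r Hr. destruct (feasible_tree_below rb r Hr) as [T' [HT' Hle]].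
    apply Rle_trans with (COST n (heaviest_incident d T')); [apply Hmin; auto|apply COST_le; auto].
Qed.

Lemma OPT_unbounded_le_feasible o rb r : is_OPT_unbounded n d o -> feasible n d rb r ->
  o <= COST n r.
Proof.
  intros [_ Hmin] Hr. destruct (feasible_tree_below rb r Hr) as [T [HT Hle]].
  eapply Rle_trans; [apply Hmin|apply COST_le; auto].
  apply feasible_heaviest_incident; [intros; apply diam_nonneg|].
  eapply spanning_tree_mono; [|eauto].
  intros u v Huv. apply complete_SDG_diam, (SDG_complete _ _ _ _ _ Huv).
Qed.

(** * Separated points force a large cost *)

Definition range_in_ball (r : nat -> R) (rad : R) (q v : nat) : R :=
  if Rlt_dec (d q v) rad then r v else 0.

Definition separated (dl : R) (Q : list nat) : Prop :=
  forall a b, In a Q -> In b Q -> a <> b -> dl <= d a b.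

(* A later new vertex [v] within [dl] of an earlier one [x] would make [(x, v)]
   an SDG-edge leaving the tree that is lighter than the edge chosen for [v]. *)
Lemma prim_heavy_vertices_separated rb dl T : is_prim_tree (SDG n d rb) d n T ->
  forall e1 e2, In e1 T -> In e2 T -> dl <= d (fst e1) (snd e1) ->
  dl <= d (fst e2) (snd e2) -> snd e1 <> snd e2 -> dl <= d (snd e1) (snd e2).
Proof.
  induction T as [|[p v] T IH]; intros HT e1 e2 H1 H2 Hd1 Hd2 Hne; [destruct H1|].
  destruct HT as [HT [Hp [Hv [Hvn [Hpv Hmin]]]]].
  assert (Hlater : forall e, In e T -> dl <= d (fst e) (snd e) -> dl <= d p v ->
                     dl <= d (snd e) v).
  { intros e He Hde Hdv. destruct (Rle_dec dl (d (snd e) v)) as [|Hlt]; auto. exfalso.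
    destruct (prim_edges _ _ _ _ HT e He) as [Hf [Hs [Hfs [Hr1 Hr2]]]].
    destruct Hpv as [_ [_ [_ [_ Hrv]]]].
    assert (Hin : In (snd e) (prim_vertices T)) by (right; apply in_map; auto).
    assert (Hsdg : SDG n d rb (snd e) v).
    { repeat split; auto; [intros <-; contradiction|lra|lra]. }
    specialize (Hmin _ _ Hin Hv Hvn Hsdg). lra. }
  destruct H1 as [<-|H1], H2 as [<-|H2]; simpl in *.
  - contradiction.
  - destruct (prim_edges _ _ _ _ HT e2 H2) as [_ [Hs _]].
    rewrite dist_sym by auto. apply Hlater; auto.
  - apply Hlater; auto.
  - apply IH; auto.
Qed.

Section LowerBound.
Variable r : nat -> R.
Hypothesis r_nonneg : forall v, (v < n)%nat -> 0 <= r v.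
Hypothesis r_connected : connected n (SDG n d r).

Lemma range_in_ball_nonneg rad q v : (v < n)%nat -> 0 <= range_in_ball r rad q v.
Proof. intros Hv. unfold range_in_ball. destruct (Rlt_dec _ _); [apply r_nonneg; auto|lra]. Qed.

(* An SDG-edge out of [u] moves at most [r u] away from [q], so a walk leaving
   the ball spends the remaining gap in ranges of vertices inside the ball. *)
Lemma range_in_ball_walk rad q u p v : (q < n)%nat -> (u < n)%nat ->
  walk (SDG n d r) u p v -> d q u < rad -> rad <= d q v ->
  rad - d q u <= sumR (map (range_in_ball r rad q) (u :: p)).
Proof.
  intros Hq. revert u. induction p as [|x p IH]; intros u Hu W Hin Hout.
  - simpl in W. subst. lra.
  - destruct W as [[_ [Hx [_ [Hux _]]]] W].
    assert (Htri := dist_triangle q u x Hq Hu Hx).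
    simpl. unfold range_in_ball at 1. destruct (Rlt_dec (d q u) rad); [|lra].
    destruct (Rlt_dec (d q x) rad) as [Hxin|Hxout].
    + specialize (IH x Hx W Hxin Hout). simpl in IH. lra.
    + assert (Hrest : 0 <= sumR (map (range_in_ball r rad q) (x :: p))).
      { apply sumR_map_nonneg. intros y [<-|Hy]; apply range_in_ball_nonneg; auto.
        eapply walk_SDG_bounded; eauto. }
      simpl in Hrest. lra.
Qed.

Lemma range_in_ball_sum_ge rad q q' : (q < n)%nat -> (q' < n)%nat -> 0 < rad ->
  rad <= d q q' -> rad <= sumR (map (range_in_ball r rad q) (seq 0 n)).
Proof.
  intros Hq Hq' Hrad Hqq'.
  destruct (r_connected q q' Hq Hq') as [p Hp].
  destruct (walk_NoDup _ _ _ _ Hp) as [p' [Hp' Hnd]].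
  assert (Hw := range_in_ball_walk rad q q p' q' Hq Hq Hp'
                  ltac:(rewrite dist_refl; auto) Hqq').
  rewrite dist_refl in Hw by auto.
  eapply Rle_trans; [|apply sumR_map_incl; eauto].
  - lra.
  - intros y Hy. apply in_seq. assert (y < n)%nat; [|lia].
    destruct Hy as [<-|Hy]; [auto|]. eapply walk_SDG_bounded; eauto.
  - intros y Hy. apply in_seq in Hy. apply range_in_ball_nonneg. lia.
Qed.

Lemma range_in_ball_disjoint rad Q v : (v < n)%nat -> NoDup Q ->
  (forall q, In q Q -> (q < n)%nat) -> separated (2 * rad) Q ->
  sumR (map (fun q => range_in_ball r rad q v) Q) <= r v.
Proof.
  intros Hv. induction Q as [|q Q IH]; intros Hnd HQ Hsep; simpl; [apply r_nonneg; auto|].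
  inversion_clear Hnd as [|? ? HqQ HndQ].
  assert (HQ' : forall q, In q Q -> (q < n)%nat) by (intros; apply HQ; right; auto).
  assert (Hsep' : separated (2 * rad) Q) by (intros a b Ha Hb; apply Hsep; right; auto).
  unfold range_in_ball at 1. destruct (Rlt_dec (d q v) rad) as [Hqv|].
  - rewrite (map_ext_in _ (fun _ => 0)), sumR_map_const; [lra|].
    intros q' Hq'. unfold range_in_ball. destruct (Rlt_dec (d q' v) rad); [exfalso|auto].
    assert (q <> q') by (intros <-; contradiction).
    assert (2 * rad <= d q q') by (apply Hsep; [left|right|]; auto).
    assert (Hq := HQ q (or_introl eq_refl)). assert (Hq'n := HQ' q' Hq').
    pose proof (dist_triangle q v q' Hq Hv Hq'n). rewrite (dist_sym v q') in * by auto. lra.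
  - specialize (IH HndQ HQ' Hsep'). lra.
Qed.

Lemma COST_ge_separated dl Q : 0 < dl -> NoDup Q -> (forall q, In q Q -> (q < n)%nat) ->
  separated dl Q -> (forall q, In q Q -> exists q', (q' < n)%nat /\ dl <= d q q') ->
  INR (length Q) * dl <= 2 * COST n r.
Proof.
  intros Hdl Hnd HQ Hsep Hfar.
  assert (Hballs : sumR (map (fun _ => dl / 2) Q) <=
    sumR (map (fun q => sumR (map (range_in_ball r (dl / 2) q) (seq 0 n))) Q)).
  { apply sumR_map_le. intros q Hq. destruct (Hfar q Hq) as [q' [Hq' Hqq']].
    apply (range_in_ball_sum_ge _ q q'); auto; lra. }
  rewrite sumR_map_const, (sumR_map_swap (fun q v => range_in_ball r (dl / 2) q v)) in Hballs.
  assert (sumR (map (fun v => sumR (map (fun q => range_in_ball r (dl / 2) q v) Q)) (seq 0 n))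
          <= COST n r).
  { apply sumR_map_le. intros v Hv. apply in_seq in Hv.
    apply range_in_ball_disjoint; auto; [lia|].
    intros a b Ha Hb Hab. replace (2 * (dl / 2)) with dl by field. auto. }
  lra.
Qed.

Lemma prim_heavy_edges_count rb dl P : is_prim_tree (SDG n d rb) d n P -> 0 < dl ->
  INR (count_ge dl (map (fun e => d (fst e) (snd e)) P)) * dl <= 2 * COST n r.
Proof.
  intros HP Hdl. unfold count_ge. rewrite filter_map_swap, length_map, <- (length_map snd).
  set (H := filter _ P).
  assert (HH : forall e, In e H -> In e P /\ dl <= d (fst e) (snd e)).
  { intros e He. apply filter_In in He. destruct He as [He Hb].
    destruct (Rle_dec _ _); [auto|discriminate]. }
  apply COST_ge_separated; auto.
  - apply NoDup_map_filter.
    pose proof (prim_vertices_NoDup _ _ _ _ HP) as Hnd. inversion_clear Hnd. auto.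
  - intros q Hq. apply in_map_iff in Hq. destruct Hq as [e [<- He]].
    eapply prim_new_vertices_lt; eauto. apply in_map, HH, He.
  - intros a b Ha Hb Hab. apply in_map_iff in Ha, Hb.
    destruct Ha as [e1 [<- He1]], Hb as [e2 [<- He2]].
    destruct (HH e1 He1), (HH e2 He2). eapply prim_heavy_vertices_separated; eauto.
  - intros q Hq. apply in_map_iff in Hq. destruct Hq as [e [<- He]].
    destruct (HH e He) as [HeP Hde].
    destruct (prim_edges _ _ _ _ HP e HeP) as [Hf [Hs _]].
    exists (fst e). split; auto. rewrite dist_sym; auto.
Qed.

End LowerBound.

Lemma exists_light_spanning_tree rb : connected n (SDG n d rb) ->
  exists P, is_spanning_tree n (SDG n d rb) P /\
    forall r, (forall v, (v < n)%nat -> 0 <= r v) -> connected n (SDG n d r) ->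
      weight d P <= 6 * ln (INR n) * COST n r.
Proof.
  intros Hc. destruct (exists_prim_spanning_tree _ d n (SDG_bounded n d rb) Hc) as [P [HPp HP]].
  exists P. split; auto. intros r Hr Hrc.
  assert (Hharm : weight d P <= 2 * COST n r * harmonic (n - 1)).
  { destruct HP as [_ [Hlen _]]. rewrite <- Hlen, <- (length_map (fun e => d (fst e) (snd e))).
    apply sumR_le_harmonic.
    - intros x Hx. apply in_map_iff in Hx. destruct Hx as [e [<- He]].
      destruct (SDG_bounded _ _ _ _ _ (prim_edges _ _ _ _ HPp e He)).
      apply dist_nonneg; auto.
    - intros dl Hdl. apply (prim_heavy_edges_count r Hr Hrc rb); auto. }
  pose proof (harmonic_pred_le_ln n). pose proof (harmonic_nonneg (n - 1)).
  pose proof (COST_nonneg n r Hr). nra.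
Qed.
End Metric.

Theorem mainTheorem5 :
  exists C : R, 0 < C /\
  forall (n : nat) (d : nat -> nat -> R) (r' : nat -> R),
    is_metric n d ->
    (forall v, (v < n)%nat -> 0 < r' v) ->
    connected n (SDG n d r') ->
    exists optM optMr : R,
      is_OPT_unbounded n d optM /\
      is_OPT n d r' optMr /\
      optM <= optMr /\
      optMr <= C * ln (INR n) * optM /\
      (forall T, is_MST n d (SDG n d r') T ->
         feasible n d r' (heaviest_incident d T) /\
         COST n (heaviest_incident d T) <= 2 * weight d T /\
         (forall T0, is_MST n d (complete n) T0 ->
            2 * weight d T <= C * ln (INR n) * weight d T0 /\
            weight d T0 <= optM)).
Proof.
  exists 24. split; [lra|]. intros n d r' Hm Hr' Hc.
  assert (Hr'0 : forall v, (v < n)%nat -> 0 <= r' v) by (intros v Hv; left; auto).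
  assert (Hcomplete : forall r u v, SDG n d r u v -> complete n u v) by apply SDG_complete.
  destruct (exists_OPT n d Hm _ (fun _ _ => diam_nonneg n d) (connected_SDG_diam n d))
    as [optM HoptM].
  destruct (exists_OPT n d Hm r' Hr'0 Hc) as [optMr HoptMr].
  pose proof HoptM as [[ropt [Hropt <-]] _].
  pose proof (feasible_nonneg _ _ _ _ Hropt) as Hropt0.
  destruct (exists_light_spanning_tree n d Hm r' Hc) as [P [HP Plight]].
  pose proof (ln_INR_nonneg n) as Hln.
  exists (COST n ropt), optMr. split; [|split; [|split; [|split]]]; auto.
  - destruct HoptMr as [[r [Hr <-]] _]. eapply OPT_unbounded_le_feasible; eauto.
  - destruct HoptMr as [_ Hmin].
    pose proof (COST_heaviest_incident_le n d Hm P (fun e He => Hcomplete r' _ _ (proj1 HP e He))).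
    pose proof (Hmin _ (feasible_heaviest_incident n d Hm r' P Hr'0 HP)).
    pose proof (Plight ropt Hropt0 (proj2 Hropt)). pose proof (COST_nonneg n ropt Hropt0). nra.
  - intros T [HT HTmin]. split; [apply feasible_heaviest_incident; auto|].
    split; [apply COST_heaviest_incident_le; auto; intros e He; apply (Hcomplete r'), HT, He|].
    intros T0 [HT0 HT0min]. split.
    + pose proof (HTmin P HP).
      pose proof (Plight _ (fun v _ => heaviest_incident_nonneg d T0 v)
                    (connected_SDG_heaviest_incident n d Hm T0 HT0)).
      pose proof (COST_heaviest_incident_le n d Hm T0 (proj1 HT0)). nra.
    + destruct (exists_spanning_tree_weight_le_COST n d ropt Hropt0 (proj2 Hropt)) as [B [HB HBw]].
      pose proof (HT0min B HB). lra.
Qed.
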